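(* $\gamma^{L-ID}(\mathcal{T})=\frac14=\gamma^{ID}(\mathcal{T})$; in particular every local identifying code in the triangular grid has density at least $1/4$, and there is a local identifying code in the triangular grid of density $1/4$.
   Context: The triangular grid $\mathcal{T}$ has vertex set $\mathbb{Z}^2$, with $\mathbf{u},\mathbf{v}$ adjacent iff $\mathbf{u}-\mathbf{v}\in\{(\pm1,0),(0,\pm1),(1,1),(-1,-1)\}$. For a nonempty $C\subseteq\mathbb{Z}^2$ and vertex $\mathbf{u}$, $I(\mathbf{u})=N[\mathbf{u}]\cap C$ where $N[\mathbf{u}]$ is the closed neighbourhood. $C$ is a local identifying code if $I(\mathbf{u})\ne\emptyset$ for all $\mathbf{u}$ and $I(\mathbf{u})\ne I(\mathbf{v})$ for all adjacent $\mathbf{u},\mathbf{v}$; it is an identifying code if moreover $I(\mathbf{u})\ne I(\mathbf{v})$ for all distinct $\mathbf{u},\mathbf{v}$. The density of $C$ is $D(C)=\limsup_{n\to\infty}|C\cap Q_n|/|Q_n|$ with $Q_n=\{(i,j)\in\mathbb{Z}^2:|i|\le n,|j|\le n\}$. $\gamma^{L-ID}(G)$ and $\gamma^{ID}(G)$ denote the smallest densities of local identifying and identifying codes in $G$, respectively. *)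

From HB Require Import structures.
From mathcomp Require Import all_boot all_order all_algebra.
From mathcomp Require Import all_classical all_reals all_analysis.
Set Implicit Arguments. Unset Strict Implicit. Unset Printing Implicit Defensive.
Import Order.TTheory GRing.Theory Num.Theory.
Local Open Scope ring_scope.
Local Open Scope classical_set_scope.

Definition vertex := (int * int)%type.

Definition tri_adj (u v : vertex) : Prop :=
  let d := (u.1 - v.1, u.2 - v.2) in
  d = (1, 0) \/ d = (-1, 0) \/ d = (0, 1) \/ d = (0, -1)
  \/ d = (1, 1) \/ d = (-1, -1).

Definition closed_nbhd (u : vertex) : set vertex := [set w | w = u \/ tri_adj u w].

Definition I_set (C : vertex -> bool) (u : vertex) : set vertex :=
  [set w | closed_nbhd u w /\ C w].

Definition local_id_code (C : vertex -> bool) : Prop :=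
  (exists w, C w) /\
  (forall u, I_set C u !=set0) /\
  (forall u v, tri_adj u v -> I_set C u <> I_set C v).

Definition id_code (C : vertex -> bool) : Prop :=
  (exists w, C w) /\
  (forall u, I_set C u !=set0) /\
  (forall u v, u <> v -> I_set C u <> I_set C v).

Definition count_Q (C : vertex -> bool) (n : nat) : nat :=
  \sum_(i < (2 * n).+1) \sum_(j < (2 * n).+1)
     nat_of_bool (C ((i : nat)%:Z - (n : nat)%:Z, (j : nat)%:Z - (n : nat)%:Z)%R).

Definition density (R : realType) (C : vertex -> bool) : \bar R :=
  limn_esup (fun n => ((count_Q C n)%:R / (((2 * n).+1) ^ 2)%:R : R)%:E).

Definition gamma_LID (R : realType) : \bar R :=
  ereal_inf [set density R C | C in local_id_code].

Definition gamma_ID (R : realType) : \bar R :=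
  ereal_inf [set density R C | C in id_code].

From HB Require Import structures.
From mathcomp Require Import all_boot all_order all_algebra.
From mathcomp Require Import all_classical all_reals all_analysis.
From mathcomp Require Import zify ring lra.
From Stdlib Require BinNat.
Import Order.TTheory GRing.Theory Num.Theory.
Local Open Scope ring_scope.
Local Open Scope classical_set_scope.

(* Discharging: every vertex u sends one unit of charge, split evenly among the |I(u)|
   codewords of its closed neighbourhood.  The charge received by a codeword c depends only on
   the code in the ball of radius 2 around c, and an exhaustive check of the 2^18 possible
   patterns there shows that c receives at most 4 as soon as every adjacent pair of N[c] is
   separated.  All the charge emitted by Q_n lands in Q_(n+1), hence |Q_n| <= 4 |C ∩ Q_(n+1)|,
   so every local identifying code has density at least 1/4.  The lattice 2Z x 2Z is an
   identifying code meeting Q_n in at most (n+1)^2 vertices. *)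

(** * Neighbourhoods and separation *)

Lemma mem_translate (V : zmodType) (c w : V) s :
  (c + w \in [seq c + x | x <- s]) = (w \in s).
Proof. exact/mem_map/addrI. Qed.

Definition nbhd_offsets : seq vertex :=
  [:: 0; (1, 0); (-1, 0); (0, 1); (0, -1); (1, 1); (-1, -1)].

Definition nbhd (u : vertex) : seq vertex := [seq u + d | d <- nbhd_offsets].

Lemma mem_nbhd u w : (w \in nbhd u) = (w - u \in nbhd_offsets).
Proof. by rewrite -{1}(subrKC u w) mem_translate. Qed.

Lemma nbhd_translate c u : nbhd (c + u) = [seq c + w | w <- nbhd u].
Proof. by rewrite -map_comp; apply: eq_map => d /=; rewrite addrA. Qed.

Lemma closed_nbhdE u w : closed_nbhd u w <-> w \in nbhd u.
Proof.
rewrite mem_nbhd -[w - u]/(w.1 - u.1, w.2 - u.2).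
case: u w => [a b] [c d]; rewrite /closed_nbhd /tri_adj /= !inE -!eq_opE !xpair_eqE.
lia.
Qed.

Lemma tri_adj_neq u v : tri_adj u v -> u <> v.
Proof. by move=> + uv; rewrite uv /tri_adj /= !subrr; do !case=> //. Qed.

Lemma tri_adjE u v : tri_adj u v <-> (v \in nbhd u) && (v != u).
Proof.
split=> [uv | /andP[/closed_nbhdE[-> /eqP//|//] _]].
by apply/andP; split; [apply/closed_nbhdE; right | apply/eqP/nesym/tri_adj_neq].
Qed.

Definition nbhd_symdiff (u v : vertex) : seq vertex :=
  [seq w <- nbhd u ++ nbhd v | (w \in nbhd u) != (w \in nbhd v)].

Lemma nbhd_symdiff_translate c u v :
  nbhd_symdiff (c + u) (c + v) = [seq c + w | w <- nbhd_symdiff u v].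
Proof.
rewrite /nbhd_symdiff !nbhd_translate -map_cat filter_map; congr map.
by apply: eq_filter => w; rewrite /preim inE !mem_translate.
Qed.

Lemma I_setE C u : I_set C u = [set w | (w \in nbhd u) && C w].
Proof.
apply/seteqP; split=> w /=.
  by case=> /closed_nbhdE-> ->.
by case/andP=> /closed_nbhdE.
Qed.

Lemma I_set_neqP C u v : I_set C u <> I_set C v <-> has C (nbhd_symdiff u v).
Proof.
rewrite !I_setE; split=> [neq | /hasP[w]].
  apply/hasP; apply: contra_notP neq => nosep.
  apply/seteqP; split=> w /= /andP[wN Cw]; rewrite Cw andbT;
  apply/negPn/negP => wN'; apply: nosep; exists w => //;
  by rewrite mem_filter mem_cat wN (negbTE wN') ?orbT.
rewrite mem_filter => /andP[neq _] Cw /seteqP[/(_ w) /= sub1 /(_ w) /= sub2].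
by move: neq sub1 sub2; rewrite Cw !andbT; do 2!case: (_ \in _) => //=; auto.
Qed.

(** * The charge received by a codeword *)

Definition nbhd0_adj_pairs : seq (vertex * vertex) :=
  [seq p <- [seq (u, v) | u <- nbhd 0, v <- nbhd u] | (p.2 \in nbhd 0) && (p.2 != p.1)].

Definition separates (f : vertex -> bool) : bool :=
  all (fun p => has f (nbhd_symdiff p.1 p.2)) nbhd0_adj_pairs.

(* [weight k = 420 / k] for [0 < k <= 7], and [420 = lcm(1, ..., 7)]. *)
Definition weight (k : nat) : nat := nth 0 [:: 0; 420; 210; 140; 105; 84; 70; 60] k.

Lemma weightK k : (0 < k <= 7)%N -> (k * weight k = 420)%N.
Proof. by case: k => [|[|[|[|[|[|[|[|]]]]]]]]. Qed.

Definition weight_at (C : vertex -> bool) (u : vertex) : nat := weight (count C (nbhd u)).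

(* 420 times the charge received by the origin. *)
Definition charge (f : vertex -> bool) : nat := \sum_(u <- nbhd 0) weight_at f u.

(* The origin comes first, so a pattern with a codeword at the origin reads [true :: s]. *)
Definition ball2 : seq vertex :=
  0 :: [seq v <- undup [seq v | u <- nbhd 0, v <- nbhd u] | v != 0].

(* The neighbourhoods and separating sets used by [charge] and [separates], as positions in
   [ball2]; a pattern on [ball2] is the list [map f ball2]. *)
Definition nbhd0_idx : seq (seq nat) :=
  Eval vm_compute in [seq [seq index w ball2 | w <- nbhd u] | u <- nbhd 0].

Definition symdiff0_idx : seq (seq nat) :=
  Eval vm_compute in
  [seq [seq index w ball2 | w <- nbhd_symdiff p.1 p.2] | p <- nbhd0_adj_pairs].

Lemma nbhd0_idxE : nbhd0_idx = [seq [seq index w ball2 | w <- nbhd u] | u <- nbhd 0].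
Proof. by vm_compute. Qed.

Lemma symdiff0_idxE :
  symdiff0_idx = [seq [seq index w ball2 | w <- nbhd_symdiff p.1 p.2] | p <- nbhd0_adj_pairs].
Proof. by vm_compute. Qed.

Lemma nbhd_sub_ball2 : all (fun u => all (mem ball2) (nbhd u)) (nbhd 0).
Proof. by vm_compute. Qed.

Lemma symdiff_sub_ball2 :
  all (fun p => all (mem ball2) (nbhd_symdiff p.1 p.2)) nbhd0_adj_pairs.
Proof. by vm_compute. Qed.

Lemma size_ball2 : size ball2 = 19%N.
Proof. by vm_compute. Qed.

(* Binary arithmetic avoids building unary sums of size 1680 for each of the patterns. *)
Definition weightsN : seq BinNums.N :=
  Eval vm_compute in [seq bin_of_nat (weight k) | k <- iota 0 8].

Definition weightN (k : nat) : BinNums.N := nth BinNums.N0 weightsN k.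

Lemma weightNE k : nat_of_bin (weightN k) = weight k.
Proof. by case: k => [|[|[|[|[|[|[|[|k]]]]]]]] //; rewrite /weightN /weight !nth_default. Qed.

Lemma nat_of_bin_sum (s : seq BinNums.N) :
  nat_of_bin (foldr BinNat.N.add BinNums.N0 s) = sumn [seq nat_of_bin x | x <- s].
Proof. by elim: s => //= x s <-; lia. Qed.

Lemma leb_nat_of_bin a b : BinNat.N.leb a b -> (nat_of_bin a <= nat_of_bin b)%N.
Proof. lia. Qed.

Definition config_ok (b : seq bool) : bool :=
  all (has (nth false b)) symdiff0_idx ==>
  BinNat.N.leb (foldr BinNat.N.add BinNums.N0
                  [seq weightN (count (nth false b) s) | s <- nbhd0_idx])
               (bin_of_nat 1680).

Fixpoint bool_fun (n : nat) : Type := if n is n'.+1 then bool -> bool_fun n' else bool.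

Fixpoint all_bool_fun (n : nat) : bool_fun n -> bool :=
  if n is n'.+1 then fun f => all_bool_fun n' (f true) && all_bool_fun n' (f false) else id.

Fixpoint curry_seq (n : nat) (P : seq bool -> bool) : bool_fun n :=
  if n is n'.+1 then fun b => curry_seq n' (fun s => P (b :: s)) else P [::].

Lemma all_bool_funP n P : all_bool_fun n (curry_seq n P) -> forall s, size s = n -> P s.
Proof.
elim: n P => [|n IH] P /=; first by move=> ? [].
by case/andP=> Pt Pf [//|[] s] /= [sz]; [exact: IH Pt _ sz | exact: IH Pf _ sz].
Qed.

(* Normalising in advance leaves only the case analysis on the 18 bits, which keeps the
   exhaustive check fast also for the kernel's reduction-based re-checking. *)
Definition config_ok_table : bool_fun 18 :=
  Eval cbv -[BinNat.N.add BinNat.N.leb] in curry_seq 18 (fun s => config_ok (true :: s)).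

Lemma config_ok_table_all : all_bool_fun 18 config_ok_table.
Proof. by vm_compute. Qed.

Lemma nth_config (f : vertex -> bool) w :
  w \in ball2 -> nth false (map f ball2) (index w ball2) = f w.
Proof. by move=> wb; rewrite (nth_map 0) ?index_mem // nth_index. Qed.

Lemma config_separatesE f :
  all (has (nth false (map f ball2))) symdiff0_idx = separates f.
Proof.
rewrite symdiff0_idxE all_map; apply: eq_in_all => p /(allP symdiff_sub_ball2) sub /=.
by rewrite has_map; apply: eq_in_has => w /(allP sub) wb /=; rewrite nth_config.
Qed.

Lemma config_chargeE f :
  nat_of_bin (foldr BinNat.N.add BinNums.N0
                [seq weightN (count (nth false (map f ball2)) s) | s <- nbhd0_idx]) = charge f.
Proof.
rewrite nat_of_bin_sum nbhd0_idxE sumnE 3!big_map.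
apply: eq_big_seq => u /(allP nbhd_sub_ball2) sub.
rewrite weightNE /weight_at count_map; congr weight.
by apply: eq_in_count => w /(allP sub) wb; exact: nth_config.
Qed.

Lemma charge_le (f : vertex -> bool) : f 0 -> separates f -> (charge f <= 1680)%N.
Proof.
move=> f0 sep_f.
have : config_ok (map f ball2).
  have -> : map f ball2 = true :: map f (behead ball2) by rewrite /= f0.
  apply: (@all_bool_funP 18 (fun s => config_ok (true :: s)) config_ok_table_all).
  by rewrite size_map size_behead size_ball2.
rewrite /config_ok config_separatesE sep_f => /leb_nat_of_bin.
by rewrite config_chargeE bin_of_natK.
Qed.

Lemma charge_translate C c : charge (fun w => C (c + w)) = \sum_(u <- nbhd c) weight_at C u.
Proof.
rewrite /charge -[in RHS](addr0 c) nbhd_translate [RHS]big_map; apply: eq_bigr => u _.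
by rewrite /weight_at nbhd_translate count_map.
Qed.

Lemma local_id_code_separates C c : local_id_code C -> separates (fun w => C (c + w)).
Proof.
move=> [_ [_ idC]]; apply/allP => p; rewrite mem_filter.
case/andP=> /andP[_ vu] /flatten_mapP[u _ /mapP[v vNu pE]]; rewrite pE /= in vu *.
have /I_set_neqP : I_set C (c + u) <> I_set C (c + v).
  by apply: idC; apply/tri_adjE; rewrite nbhd_translate mem_translate (inj_eq (addrI c)) vNu.
by rewrite nbhd_symdiff_translate has_map.
Qed.

Lemma received_charge_le C c : local_id_code C -> C c ->
  (\sum_(u <- nbhd c) weight_at C u <= 1680)%N.
Proof.
move=> codeC Cc; rewrite -charge_translate.
by apply: charge_le; [rewrite addr0 | exact: local_id_code_separates].
Qed.

Lemma count_nbhdE (C : vertex -> bool) u :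
  count C (nbhd u) = (\sum_(d <- nbhd_offsets) C (u + d)%R)%N.
Proof. by rewrite count_map -sumn_count sumnE big_map. Qed.

Lemma count_mul_weight_at C u : local_id_code C -> (count C (nbhd u) * weight_at C u = 420)%N.
Proof.
move=> [_ [ne _]]; apply: weightK; apply/andP; split.
  have [w] := ne u; rewrite I_setE => /andP[wN Cw].
  by rewrite -has_count; apply/hasP; exists w.
by rewrite (leq_trans (count_size _ _)) // size_map.
Qed.

Lemma nbhd_offsetsN : perm_eq [seq - d | d <- nbhd_offsets] nbhd_offsets.
Proof. by []. Qed.

Lemma sum_nbhd_reflect (F : vertex -> nat) c :
  (\sum_(d <- nbhd_offsets) F (c - d)%R = \sum_(u <- nbhd c) F u)%N.
Proof. by rewrite [RHS]big_map -[RHS](perm_big _ nbhd_offsetsN) big_map. Qed.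

(** * Double counting over the squares Q_n *)

Definition sumQ (n : nat) (g : vertex -> nat) : nat :=
  \sum_(i < (2 * n).+1) \sum_(j < (2 * n).+1) g (i%:Z - n%:Z, j%:Z - n%:Z)%R.

Lemma count_QE C n : count_Q C n = sumQ n (fun w => C w).
Proof. by []. Qed.

Lemma sumQ_sum n (I : Type) (r : seq I) (G : I -> vertex -> nat) :
  sumQ n (fun w => \sum_(i <- r) G i w)%N = (\sum_(i <- r) sumQ n (G i))%N.
Proof. by rewrite /sumQ [RHS]exchange_big; apply: eq_bigr => i _; rewrite [RHS]exchange_big. Qed.

Lemma sumQ_mulr n g k : sumQ n (fun w => g w * k)%N = (sumQ n g * k)%N.
Proof. by rewrite /sumQ big_distrl; apply: eq_bigr => i _; rewrite big_distrl. Qed.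

Lemma leq_sumQ n g h : (forall w, g w <= h w)%N -> (sumQ n g <= sumQ n h)%N.
Proof. by move=> gh; apply: leq_sum => i _; apply: leq_sum. Qed.

Lemma sumQ_const n k : sumQ n (fun _ => k) = ((2 * n).+1 ^ 2 * k)%N.
Proof.
rewrite /sumQ; under eq_bigr do rewrite big_const_ord iter_addn_0.
by rewrite big_const_ord iter_addn_0 -mulnA mulnC expnS expn1.
Qed.

Lemma sum_ord_shift_le (H : nat -> nat) m k p : (k + m <= p)%N ->
  (\sum_(i < m) H (i + k) <= \sum_(i < p) H i)%N.
Proof.
move=> kmp; rewrite -(subnKC kmp) big_split_ord /= big_split_ord /=.
apply: (leq_trans _ (leq_addr _ _)); apply: (leq_trans _ (leq_addl _ _)).
by apply: leq_sum => i _; rewrite addnC.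
Qed.

Lemma sum_centered_shift (h : int -> nat) n (x : int) : -1 <= x <= 1 ->
  (\sum_(i < (2 * n).+1) h (i%:Z - n%:Z + x)%R <=
   \sum_(i < (2 * n.+1).+1) h (i%:Z - n.+1%:Z)%R)%N.
Proof.
move=> x_small.
have [k k_le2 ->] : exists2 k : nat, (k <= 2)%N & x = k%:Z - 1 by exists (absz (x + 1)); lia.
rewrite (eq_bigr (fun i : 'I__ => h ((i + k)%N%:Z - n.+1%:Z))) => [|i _]; last by congr h; lia.
by apply: (sum_ord_shift_le (fun j => h (j%:Z - n.+1%:Z))); lia.
Qed.

Lemma sumQ_shift n (g : vertex -> nat) (d : vertex) : -1 <= d.1 <= 1 -> -1 <= d.2 <= 1 ->
  (sumQ n (fun w => g (w + d)%R) <= sumQ n.+1 g)%N.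
Proof.
move=> d1 d2; rewrite /sumQ.
apply: (@leq_trans (\sum_(i < (2 * n).+1) \sum_(j < (2 * n.+1).+1)
                      g (i%:Z - n%:Z + d.1, j%:Z - n.+1%:Z)%R)).
  by apply: leq_sum => i _; exact: (sum_centered_shift (fun y => g (_, y))).
rewrite exchange_big [X in (_ <= X)%N]exchange_big; apply: leq_sum => j _.
exact: (sum_centered_shift (fun x => g (x, _))).
Qed.

Lemma nbhd_offsets_small :
  all (fun d : vertex => (-1 <= d.1 <= 1) && (-1 <= d.2 <= 1)) nbhd_offsets.
Proof. by []. Qed.

Lemma card_Q_le_count C n : local_id_code C -> ((2 * n).+1 ^ 2 <= 4 * count_Q C n.+1)%N.
Proof.
move=> codeC.
have emitted : sumQ n (fun _ => 420%N) =
    (\sum_(d <- nbhd_offsets) sumQ n (fun u => C (u + d)%R * weight_at C u))%N.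
  rewrite -sumQ_sum; apply: eq_bigr => i _; apply: eq_bigr => j _.
  by rewrite -big_distrl /= -count_nbhdE count_mul_weight_at.
have shifted : (\sum_(d <- nbhd_offsets) sumQ n (fun u => C (u + d)%R * weight_at C u) <=
    \sum_(d <- nbhd_offsets) sumQ n.+1 (fun c => C c * weight_at C (c - d)%R))%N.
  rewrite big_seq [X in (_ <= X)%N]big_seq; apply: leq_sum => d /(allP nbhd_offsets_small).
  case/andP=> d1 d2.
  pose g c := (C c * weight_at C (c - d)%R)%N.
  have -> : sumQ n (fun u => C (u + d)%R * weight_at C u)%N = sumQ n (fun u => g (u + d)%R).
    by congr sumQ; apply/funext => u; rewrite /g addrK.
  exact: sumQ_shift.
have received : (\sum_(d <- nbhd_offsets) sumQ n.+1 (fun c => C c * weight_at C (c - d)%R) <=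
    sumQ n.+1 (fun c => C c * 1680))%N.
  rewrite -sumQ_sum; apply: leq_sumQ => c; rewrite -big_distrr /=.
  case: (boolP (C c)) => Cc; rewrite ?mul0n // !mul1n sum_nbhd_reflect.
  exact: received_charge_le.
move: (leq_trans shifted received); rewrite -emitted sumQ_const sumQ_mulr -count_QE; lia.
Qed.

(** * The code 2Z x 2Z *)

Lemma id_code_local C : id_code C -> local_id_code C.
Proof.
by case=> ? [? idC]; split=> //; split=> // u v /tri_adj_neq; exact: idC.
Qed.

Definition even_lattice (w : vertex) : bool := ((w.1 %% 2)%Z == 0) && ((w.2 %% 2)%Z == 0).

Definition parity (u : vertex) : vertex := ((u.1 %% 2)%Z, (u.2 %% 2)%Z).

Lemma even_lattice_parity u x : even_lattice (u + x) = even_lattice (parity u + x).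
Proof. by rewrite /even_lattice /= !modzDml. Qed.

Lemma has_even_lattice_parity u s :
  has even_lattice [seq u + x | x <- s] = has even_lattice [seq parity u + x | x <- s].
Proof. by rewrite !has_map; apply: eq_has => x; exact: even_lattice_parity. Qed.

Definition parities : seq vertex := [:: (0, 0); (0, 1); (1, 0); (1, 1)].

Lemma parity_in u : parity u \in parities.
Proof. by case: u => a b; rewrite /parity /parities /= !inE !xpair_eqE; lia. Qed.

(* Vertices with the same I(.) share a codeword, so they differ by an element of [nbhd_diffs];
   by periodicity it suffices to separate such pairs for the four residues mod 2. *)
Definition nbhd_diffs : seq vertex := [seq d - d' | d <- nbhd_offsets, d' <- nbhd_offsets].

Lemma even_lattice_dominates : all (fun r => has even_lattice (nbhd r)) parities.
Proof. by vm_compute. Qed.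

Lemma even_lattice_separates :
  all (fun r => all (fun e => (e == 0) || has even_lattice (nbhd_symdiff r (r + e)))
                    nbhd_diffs)
      parities.
Proof. by vm_compute. Qed.

Lemma even_lattice_I_set_neq0 u : I_set even_lattice u !=set0.
Proof.
have := allP even_lattice_dominates _ (parity_in u).
rewrite -(has_even_lattice_parity u nbhd_offsets) => /hasP[w wN Lw].
by exists w; rewrite I_setE /= wN.
Qed.

Lemma even_lattice_id_code : id_code even_lattice.
Proof.
split; first by exists 0.
split=> [|u v uv Iuv]; first exact: even_lattice_I_set_neq0.
have [w Iuw] := even_lattice_I_set_neq0 u.
have Ivw : I_set even_lattice v w by rewrite -Iuv.
move: Iuw Ivw; rewrite !I_setE => /andP[wNu _] /andP[wNv _].
have : v - u \in nbhd_diffs.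
  have -> : v - u = (w - u) - (w - v) by rewrite [RHS]addrC opprB addrA subrK.
  by apply: (allpairs_f (fun d d' : vertex => d - d')); rewrite -mem_nbhd.
move=> /(allP (allP even_lattice_separates _ (parity_in u))) /orP[/eqP vu|].
  by apply: uv; rewrite -(subrKC u v) vu addr0.
rewrite -{1}(addr0 (parity u)) nbhd_symdiff_translate -has_even_lattice_parity.
rewrite -nbhd_symdiff_translate addr0 subrKC => /I_set_neqP; exact.
Qed.

Lemma sum_not_odd m p :
  (\sum_(i < m) ~~ odd (i + p) = if odd p then m./2 else uphalf m)%N.
Proof.
elim: m => [|m IH]; first by rewrite big_ord0; case: (odd p).
by rewrite big_ord_recr /= IH; case p_odd: (odd p); lia.
Qed.

Lemma sum_even_centered n :
  (\sum_(i < (2 * n).+1) ((i%:Z - n%:Z) %% 2 == 0)%Z <= n.+1)%N.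
Proof.
have even_shift (i : nat) : ((i%:Z - n%:Z) %% 2 == 0)%Z = ~~ odd (i + n) by lia.
under eq_bigr do rewrite even_shift.
by rewrite sum_not_odd; case: (odd n); lia.
Qed.

Lemma count_Q_even_lattice n : (count_Q even_lattice n <= n.+1 ^ 2)%N.
Proof.
pose e (i : 'I_(2 * n).+1) : nat := ((i%:Z - n%:Z) %% 2 == 0)%Z.
have -> : count_Q even_lattice n = ((\sum_i e i) * (\sum_j e j))%N.
  rewrite [RHS]big_distrl; apply: eq_bigr => i _; rewrite [RHS]big_distrr; apply: eq_bigr => j _.
  by rewrite /even_lattice /e /=; do 2!case: eqP.
by rewrite expnS expn1 leq_mul ?sum_even_centered.
Qed.

(** * Densities *)

Section LimsupBounds.
Variable R : realType.

Lemma limn_esupE (u : (\bar R)^nat) : limn_esup u = ereal_inf (range (esups u)).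
Proof. by rewrite limn_esup_lim; apply: cvg_lim => //; exact: cvg_esups_inf. Qed.

Lemma natSinv_le_eventually (e : R) : 0 < e ->
  exists N, forall n, (N <= n)%N -> n.+1%:R^-1 <= e.
Proof.
move=> e0; have [N _ small] := near_infty_natSinv_lt (PosNum e0).
by exists N => n Nn; apply/ltW/small.
Qed.

Lemma limn_esup_ge (u : R^nat) (a : R) : (forall n, a <= u n.+1 + n.+1%:R^-1) ->
  (a%:E <= limn_esup (fun n => (u n)%:E))%E.
Proof.
move=> lb; rewrite limn_esupE; apply: le_ereal_inf_tmp => _ [N _ <-].
apply/lee_addgt0Pr => e e0; have [M small] := natSinv_le_eventually _ e0.
pose m := (N + M)%N.
apply: (@le_trans _ _ (u m.+1 + e)%:E).
  by rewrite lee_fin (le_trans (lb m)) // lerD2l small // leq_addl.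
rewrite EFinD leeD2r //; apply: ereal_sup_ubound; exists m.+1 => //=.
by rewrite /m; lia.
Qed.

Lemma limn_esup_le (u : R^nat) (a : R) : (forall n, u n <= a + n.+1%:R^-1) ->
  (limn_esup (fun n => (u n)%:E) <= a%:E)%E.
Proof.
move=> ub; rewrite limn_esupE; apply/lee_addgt0Pr => e e0.
have [N small] := natSinv_le_eventually _ e0.
apply: ge_ereal_inf; exists (esups (fun n => (u n)%:E) N); first by exists N.
apply: ge_ereal_sup => _ [k /= Nk <-]; rewrite -EFinD lee_fin.
by rewrite (le_trans (ub k)) // lerD2l small.
Qed.

Lemma ratio_ge_quarter (n q : nat) : ((2 * n).+1 ^ 2 <= 4 * q)%N ->
  1 / 4 <= q%:R / ((2 * n.+1).+1 ^ 2)%:R + n.+1%:R^-1 :> R.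
Proof.
rewrite -(ler_nat R) natrM; set t : R := n%:R; set Q : R := q%:R => lbQ.
have t0 : 0 <= t by rewrite /t ler0n.
have -> : (((2 * n.+1).+1 ^ 2)%:R : R) = (2 * t + 3) ^+ 2 by rewrite /t; ring.
have -> : (n.+1%:R : R) = t + 1 by rewrite /t; ring.
have {}lbQ : (2 * t + 1) ^+ 2 <= 4 * Q by move: lbQ; rewrite /t; congr (_ <= _); ring.
have S0 : 0 < (2 * t + 3) ^+ 2 by rewrite exprn_gt0 //; lra.
rewrite -lerBlDr ler_pdivlMr //.
have : 2 * (t + 1) <= (t + 1)^-1 * (2 * t + 3) ^+ 2.
  by rewrite (mulrC _^-1) ler_pdivlMr; [nra | lra].
nra.
Qed.

Lemma ratio_le_quarter (n q : nat) : (q <= n.+1 ^ 2)%N ->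
  q%:R / ((2 * n).+1 ^ 2)%:R <= 1 / 4 + n.+1%:R^-1 :> R.
Proof.
rewrite -(ler_nat R); set t : R := n%:R; set Q : R := q%:R => ubQ.
have t0 : 0 <= t by rewrite /t ler0n.
have -> : (((2 * n).+1 ^ 2)%:R : R) = (2 * t + 1) ^+ 2 by rewrite /t; ring.
have -> : (n.+1%:R : R) = t + 1 by rewrite /t; ring.
have {}ubQ : Q <= (t + 1) ^+ 2 by move: ubQ; rewrite /t; congr (_ <= _); ring.
have S0 : 0 < (2 * t + 1) ^+ 2 by rewrite exprn_gt0 //; lra.
rewrite ler_pdivrMr //.
have : t + 1 <= (t + 1)^-1 * (2 * t + 1) ^+ 2.
  by rewrite (mulrC _^-1) ler_pdivlMr; [nra | lra].
nra.
Qed.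

End LimsupBounds.

Lemma density_ge_quarter (R : realType) C : local_id_code C ->
  ((1 / 4 : R)%:E <= density R C)%E.
Proof.
move=> codeC; apply: limn_esup_ge => n.
exact/ratio_ge_quarter/card_Q_le_count.
Qed.

Lemma density_even_lattice_le (R : realType) : (density R even_lattice <= (1 / 4 : R)%:E)%E.
Proof. by apply: limn_esup_le => n; exact/ratio_le_quarter/count_Q_even_lattice. Qed.

Local Open Scope ereal_scope.

Theorem mainTheorem16 (R : realType) :
  gamma_LID R = (1 / 4 : R)%:E /\ gamma_ID R = (1 / 4 : R)%:E /\
  (forall C : vertex -> bool, local_id_code C -> (1 / 4 : R)%:E <= density R C) /\
  (exists C : vertex -> bool, local_id_code C /\ density R C = (1 / 4 : R)%:E).
Proof.
have even_lattice_local := id_code_local _ even_lattice_id_code.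
have density_even_lattice : density R even_lattice = (1 / 4 : R)%:E.
  by apply/eqP; rewrite eq_le density_even_lattice_le density_ge_quarter.
split.
  apply/eqP; rewrite eq_le; apply/andP; split.
    by apply: ereal_inf_lbound; exists even_lattice.
  by apply: le_ereal_inf_tmp => _ [C codeC <-]; exact: density_ge_quarter.
split.
  apply/eqP; rewrite eq_le; apply/andP; split.
    by apply: ereal_inf_lbound; exists even_lattice => //; exact: even_lattice_id_code.
  by apply: le_ereal_inf_tmp => _ [C /id_code_local codeC <-]; exact: density_ge_quarter.
split; first exact: density_ge_quarter.
by exists even_lattice.
Qed.
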